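(* Let $x=(x_k)_{k\in\mathbb{Z}}$ be a sequence with $x_k\in\{-1,0,1,2,\dots\}$ for all $k$, let $T$ be its record graph, and let $i\in\mathbb{Z}$. If $t_x(i)=-1$, then the number of children of $i$ in $T$ is $d_1(i,T)=x_{i-1}+1$. If $t_x(i)\ge0$, then $d_1(i,T)=x_{i-1}+1-t_x(i)$.
   Context: Write $y(j,k)=\sum_{l=j}^{k-1}x_l$ for $j<k$. The record map is $R_x(i)=\inf\{n>i: y(i,n)\ge0\}$ if this set is nonempty, and $R_x(i)=i$ otherwise; the record graph has vertex set $\mathbb{Z}$ and directed edges $i\to R_x(i)$ for $R_x(i)\ne i$; the children of $i$ are the $j\ne i$ with $R_x(j)=i$. The type of $i$ is $t_x(i)=\inf\{\max(y(m,i),-1): m<i\}\in\{-1,0,1,\dots\}$. *)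

From mathcomp Require Import all_boot all_order all_algebra.
Set Implicit Arguments. Unset Strict Implicit. Unset Printing Implicit Defensive.
Import Order.TTheory GRing.Theory Num.Theory.
Local Open Scope ring_scope.

(* y(j,k) = sum_{l=j}^{k-1} x_l  (meaningful for j < k; empty sum = 0 otherwise) *)
Definition ysum (x : int -> int) (j k : int) : int :=
  \sum_(0 <= l < `|k - j|%N) x (j + l%:Z).

Definition record_map (x : int -> int) (j n : int) : Prop :=
  (j < n /\ 0 <= ysum x j n /\ forall m, j < m -> m < n -> ysum x j m < 0)
  \/ (n = j /\ forall m, j < m -> ysum x j m < 0).

Definition child (x : int -> int) (i j : int) : Prop :=
  j <> i /\ record_map x j i.

(* t is the type t_x(i) = inf { max(y(m,i), -1) : m < i }; the set is a
   nonempty set of integers bounded below by -1, so the infimum is attained. *)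
Definition is_type (x : int -> int) (i t : int) : Prop :=
  (exists2 m, m < i & Num.max (ysum x m i) (-1) = t) /\
  (forall m, m < i -> t <= Num.max (ysum x m i) (-1)).

Definition num_children (x : int -> int) (i c : int) : Prop :=
  exists s : seq int, [/\ uniq s, (forall j, j \in s <-> child x i j)
                        & (size s)%:Z = c].

From mathcomp Require Import all_boot all_order all_algebra zify.
Set Implicit Arguments. Unset Strict Implicit. Unset Printing Implicit Defensive.
Import Order.TTheory GRing.Theory Num.Theory.
Local Open Scope ring_scope.

(* Read x backwards from i: b n := y(i - n, i) is a walk with b 0 = 0 whose
   steps x_(i-n-1) are >= -1, and i - k is a child of i exactly when b k >= 0
   and b k is a strict new minimum among b 1, ..., b k.  A walk that descends
   by at most one per step sets its strict new minima at every level from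
   b 1 = x_(i-1) down to its infimum, once each, so the nonnegative ones number
   x_(i-1) + 1 - max(inf b, 0); and t = max(inf b, -1) is attained at some
   finite depth, beyond which no new nonnegative minimum can occur. *)

Section IntervalSums.
Variable x : int -> int.

Lemma ysumxx (j : int) : ysum x j j = 0.
Proof. by rewrite /ysum subrr big_geq. Qed.

Lemma ysumS (j : int) : ysum x j (j + 1) = x j.
Proof. by rewrite /ysum addrAC subrr add0r big_nat1 addr0. Qed.

Lemma ysum_cat (j m k : int) : j <= m -> m <= k ->
  ysum x j k = ysum x j m + ysum x m k.
Proof.
move=> le_jm le_mk; rewrite /ysum.
have -> : `|k - j|%N = (`|m - j| + `|k - m|)%N by lia.
rewrite (big_cat_nat (leq0n _) (leq_addr _ _)) /=; congr (_ + _).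
rewrite -{1}[`|m - j|%N]add0n big_addn addKn.
by apply: eq_bigr => l _; congr x; lia.
Qed.

End IntervalSums.

Definition bsum (x : int -> int) (i : int) (n : nat) : int := ysum x (i - n%:Z) i.

Section BackwardSums.
Variables (x : int -> int) (i : int).

Lemma bsum0 : bsum x i 0 = 0.
Proof. by rewrite /bsum subr0 ysumxx. Qed.

Lemma bsumS (n : nat) : bsum x i n.+1 = x (i - n.+1%:Z) + bsum x i n.
Proof.
rewrite /bsum (@ysum_cat x (i - n.+1%:Z) (i - n%:Z) i); [|lia|lia].
by rewrite (_ : i - n%:Z = i - n.+1%:Z + 1) ?ysumS //; lia.
Qed.

Lemma bsum1 : bsum x i 1 = x (i - 1).
Proof. by rewrite bsumS bsum0 addr0. Qed.

Lemma bsum_step (hx : forall k, -1 <= x k) (n : nat) :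
  bsum x i n - 1 <= bsum x i n.+1.
Proof. by rewrite bsumS; have := hx (i - n.+1%:Z); lia. Qed.

Lemma ysum_bsum (k n : nat) : (k <= n)%N ->
  ysum x (i - n%:Z) (i - k%:Z) = bsum x i n - bsum x i k.
Proof.
move=> le_kn; rewrite /bsum (@ysum_cat x (i - n%:Z) (i - k%:Z) i); [|lia|lia].
by rewrite addrK.
Qed.

End BackwardSums.

Definition new_low (b : nat -> int) (k : nat) : bool :=
  all (fun l => b k < b l) (iota 1 k.-1).

(* [prefix_min b n] is the minimum of b 1, ..., b n.+1. *)
Fixpoint prefix_min (b : nat -> int) (n : nat) : int :=
  if n is n'.+1 then Num.min (prefix_min b n') (b n.+1) else b 1%N.

Section PrefixMinimum.
Variable b : nat -> int.

Lemma prefix_min_le (n k : nat) : (0 < k <= n.+1)%N -> prefix_min b n <= b k.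
Proof.
elim: n => [|n IHn] range_k /=; first by rewrite (_ : k = 1%N) //; lia.
rewrite ge_min; case: (leqP k n.+1) => [le_kn | lt_nk].
  by rewrite IHn //; lia.
by rewrite (_ : k = n.+2) ?lexx ?orbT //; lia.
Qed.

Lemma prefix_min_attained (n : nat) :
  exists2 k, (0 < k <= n.+1)%N & prefix_min b n = b k.
Proof.
elim: n => [|n [k range_k min_k]] /=; first by exists 1%N.
rewrite {}min_k.
by case: (lerP (b k) (b n.+2)) => [le_k | lt_k]; [exists k | exists n.+2]; lia.
Qed.

Lemma all_gt_prefix_min (n : nat) (v : int) :
  all (fun k => v < b k) (iota 1 n.+1) = (v < prefix_min b n).
Proof.
elim: n => [|n IHn]; first by rewrite /= andbT.
by rewrite -[n.+2]addn1 iotaD all_cat IHn /= andbT add1n lt_min.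
Qed.

Lemma new_low_prefix_min (n : nat) : new_low b n.+2 = (b n.+2 < prefix_min b n).
Proof. exact: all_gt_prefix_min. Qed.

End PrefixMinimum.

Section WalkLows.
Variable b : nat -> int.
Hypothesis b0 : b 0%N = 0.
Hypothesis b_step : forall n, b n - 1 <= b n.+1.

Lemma count_nonneg_new_low (n : nat) :
  (count (fun k => (0 <= b k) && new_low b k) (iota 1 n.+1))%:Z
  = b 1%N + 1 - Num.max (prefix_min b n) 0.
Proof.
elim: n => [|n IHn].
  have := b_step 0; rewrite b0 /= /new_low /= andbT addn0.
  by case: (lerP 0 (b 1%N)) => /=; lia.
rewrite -[n.+2]addn1 iotaD count_cat PoszD IHn add1n /= addn0 new_low_prefix_min.
have := @prefix_min_le b n n.+1; have := b_step n.+1.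
by case: (lerP 0 (b n.+2)); case: (ltrP (b n.+2) (prefix_min b n)) => /=; lia.
Qed.

End WalkLows.

Section LowestLevel.
Variables (b : nat -> int) (n : nat) (t : int).
Hypothesis t_attained : Num.max (b n.+1) (-1) = t.
Hypothesis t_min : forall k, (0 < k)%N -> t <= Num.max (b k) (-1).

Lemma max_prefix_min_lowest : Num.max (prefix_min b n) 0 = Num.max t 0.
Proof.
have [k range_k min_k] := prefix_min_attained b n.
have := @t_min k; have := @prefix_min_le b n n.+1; lia.
Qed.

Lemma nonneg_new_low_le (k : nat) :
  (0 < k)%N -> 0 <= b k -> new_low b k -> (k <= n.+1)%N.
Proof.
move=> k_gt0 b_k_ge0 /allP low_k; rewrite leqNgt; apply/negP => lt_nk.
have := low_k n.+1; rewrite mem_iota add1n prednK // => /(_ ltac:(lia)).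
have := t_min k_gt0; lia.
Qed.

End LowestLevel.

Section RecordGraph.
Variables (x : int -> int) (i : int).

Lemma child_lt (j : int) : child x i j -> j < i.
Proof. by case=> ne_ji [[lt_ji _] | [eq_ij _]]; last lia. Qed.

Lemma child_bsum (k : nat) : (0 < k)%N ->
  child x i (i - k%:Z) <-> (0 <= bsum x i k) && new_low (bsum x i) k.
Proof.
move=> k_gt0; split.
- case=> ne_ji [[_ [ge0 below]] | [eq_ij _]]; last lia.
  apply/andP; split=> //; apply/allP=> l; rewrite mem_iota add1n prednK // => range_l.
  by have := below (i - l%:Z); rewrite ysum_bsum ?subr_lt0; [apply; lia | lia].
- case/andP=> ge0 /allP low_k; split; first lia.
  left; split; first lia; split=> // m lt_jm lt_mi.
  have [l eq_m] : exists l : nat, m = i - l%:Z by exists `|i - m|%N; lia.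
  subst m; rewrite ysum_bsum ?subr_lt0; last lia.
  by apply: low_k; rewrite mem_iota add1n prednK //; lia.
Qed.

Lemma is_type_bsum (t : int) : is_type x i t ->
  exists2 n, Num.max (bsum x i n.+1) (-1) = t
           & forall k, (0 < k)%N -> t <= Num.max (bsum x i k) (-1).
Proof.
case=> [[m lt_mi attained] lowest].
have [n eq_m] : exists n : nat, m = i - n.+1%:Z by exists `|i - m|%N.-1; lia.
subst m; exists n => // k k_gt0.
by apply: lowest; lia.
Qed.

End RecordGraph.

Theorem lemma4p5 (x : int -> int) (hx : forall k, -1 <= x k) (i t : int)
  (ht : is_type x i t) :
  (t = -1 -> num_children x i (x (i - 1) + 1)) /\
  (0 <= t -> num_children x i (x (i - 1) + 1 - t)).
Proof.
have [n t_attained t_min] := is_type_bsum ht.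
set b := bsum x i in t_attained t_min.
suff children c : c = b 1%N + 1 - Num.max t 0 -> num_children x i c.
  by rewrite /b bsum1 in children; split=> t_val; apply: children; lia.
move=> ->; exists [seq i - k%:Z | k <- iota 1 n.+1 & (0 <= b k) && new_low b k].
split.
- by rewrite map_inj_uniq ?filter_uniq ?iota_uniq // => k l; lia.
- move=> j; split.
  + case/mapP=> k; rewrite mem_filter mem_iota => /andP[low_k range_k] ->.
    by apply/(child_bsum x i); first lia.
  + move=> child_j; have lt_ji := child_lt child_j.
    have [k eq_j] : exists k : nat, j = i - k%:Z by exists `|i - j|%N; lia.
    have k_gt0 : (0 < k)%N by lia.
    subst j; move/(child_bsum x i k_gt0): child_j => low_k.
    apply/mapP; exists k => //; rewrite mem_filter mem_iota low_k /=.
    by case/andP: low_k => ge0 /(nonneg_new_low_le t_attained t_min k_gt0 ge0); lia.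
- rewrite size_map size_filter (count_nonneg_new_low (bsum0 x i) (bsum_step i hx)).
  by rewrite (max_prefix_min_lowest t_attained t_min).
Qed.
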